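(* Let $n\ge 1$ and let $G$ be a graph on the vertex set $[n]=\{1,\dots,n\}$. Assume there exists an involution $\tau$ of $[n]$ (a permutation with $\tau^2=\mathrm{id}$, possibly with fixed points) such that every $3$-element subset $S\subseteq[n]$ satisfies $$|E(G[S])|+|E(G[\tau(S)])|\ge 2 .$$ Then $|E(G)|\ge |E(T(n))|=\binom{\lfloor n/2\rfloor}{2}+\binom{\lceil n/2\rceil}{2}$.
   Context: $G[A]$ denotes the subgraph of $G$ induced on the vertex subset $A$, and $\tau(S)=\{\tau(s):s\in S\}$. $T(n)$ denotes the graph on $[n]$ that is the disjoint union of two cliques of sizes $\lfloor n/2\rfloor$ and $\lceil n/2\rceil$. *)

From mathcomp Require Import all_boot all_fingroup.
Set Implicit Arguments. Unset Strict Implicit. Unset Printing Implicit Defensive.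

(* A simple graph on vertex set [n] (represented as 'I_n = {0,..,n-1})
   is a symmetric irreflexive boolean relation. *)
Definition simple_graph (n : nat) (e : rel 'I_n) : Prop :=
  irreflexive e /\ symmetric e.

Definition induced_edges (n : nat) (e : rel 'I_n) (A : {set 'I_n}) : nat :=
  #|[set p : 'I_n * 'I_n | [&& (p.1 < p.2)%N, p.1 \in A, p.2 \in A & e p.1 p.2]]|.

Definition num_edges (n : nat) (e : rel 'I_n) : nat := induced_edges e setT.

Definition turan2_edges (n : nat) : nat := 'C(n./2, 2) + 'C(uphalf n, 2).

From mathcomp Require Import all_boot all_fingroup zify.
Set Implicit Arguments. Unset Strict Implicit. Unset Printing Implicit Defensive.

(* Give the pair {i, j} the weight w i j := e i j + e (tau i) (tau j).  Summed
   over ordered pairs of a vertex set S this counts the edges of G[S] and of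
   G[tau S] twice each, so the hypothesis says that every triangle has total
   weight at least 2, and the total weight is 4 |E(G)|.  For such a weighting
   a Mantel-type induction gives total weight >= 4 |E(T(k))| on k vertices:
   either some pair {u, v} has weight 0, and then every other vertex sends
   weight >= 2 to {u, v}, or all pairs have weight >= 1, and
   k (k - 1) >= 4 |E(T(k))|. *)

Lemma turan2_edgesSS m : turan2_edges m.+2 = turan2_edges m + m.
Proof.
rewrite /turan2_edges /= !uphalf_half /= !binS !bin1.
have := odd_double_half m; lia.
Qed.

Lemma turan2_edges_le k : 4 * turan2_edges k + k <= k * k.
Proof.
have [m] := ubnP k; elim: m k => // m IHm [|[|k]] //; rewrite ltnS => lt_km.
by rewrite turan2_edgesSS; have := IHm k (ltnW lt_km); lia.
Qed.

Definition pair_weight (T : finType) (w : T -> T -> nat) (A : {set T}) : nat :=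
  \sum_(i in A) \sum_(j in A) w i j.

Lemma sum_setD2 (T : finType) (F : T -> nat) (A : {set T}) u v :
  u \in A -> v \in A -> u != v ->
  \sum_(i in A) F i = F u + F v + \sum_(i in A :\ u :\ v) F i.
Proof.
move=> uA vA uv; have vAu : v \in A :\ u by rewrite in_setD1 eq_sym uv.
by rewrite (big_setD1 u uA) (big_setD1 v vAu) -addnA.
Qed.

Lemma cards_setD2 (T : finType) (A : {set T}) u v :
  u \in A -> v \in A -> u != v -> #|A| = (#|A :\ u :\ v|).+2.
Proof.
move=> uA vA uv; have vAu : v \in A :\ u by rewrite in_setD1 eq_sym uv.
by rewrite (cardsD1 u A) (cardsD1 v (A :\ u)) uA vAu.
Qed.

Lemma sum_set3 (T : finType) (F : T -> nat) x y z :
  x != y -> y != z -> x != z -> \sum_(i in x |: [set y; z]) F i = F x + F y + F z.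
Proof.
move=> xy yz xz; rewrite big_setU1 /= ?big_setU1 /= ?big_set1 ?addnA //.
  by rewrite inE yz.
by rewrite !inE negb_or xy xz.
Qed.

Section WeightedMantel.

Variables (T : finType) (w : T -> T -> nat).
Hypothesis wC : forall i j, w i j = w j i.
Hypothesis w_diag : forall i, w i i = 0.

Lemma pair_weight_set3 x y z : x != y -> y != z -> x != z ->
  pair_weight w (x |: [set y; z]) = 2 * (w x y + w x z + w y z).
Proof.
move=> xy yz xz; rewrite /pair_weight !sum_set3 // !w_diag.
by rewrite (wC y x) (wC z x) (wC z y); lia.
Qed.

Lemma pair_weightD2 (A : {set T}) u v : u \in A -> v \in A -> u != v ->
  pair_weight w A =
    pair_weight w (A :\ u :\ v) + 2 * (w u v + \sum_(i in A :\ u :\ v) (w u i + w v i)).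
Proof.
move=> uA vA uv.
rewrite /pair_weight (sum_setD2 _ uA vA uv) !(sum_setD2 (w _) uA vA uv).
under [X in _ + X]eq_bigr => i _ do
  rewrite (sum_setD2 (w i) uA vA uv) (wC i u) (wC i v).
rewrite big_split /= big_split /= !w_diag (wC v u); lia.
Qed.

Lemma pair_weight_dense (A : {set T}) :
  (forall i j, i \in A -> j \in A -> i != j -> 0 < w i j) ->
  #|A| * #|A| <= pair_weight w A + #|A|.
Proof.
move=> w_pos; rewrite -{1 3}sum1_card big_distrl /= -big_split leq_sum // => i iA.
rewrite mul1n -sum1_card (bigD1 i iA) /= (bigD1 i iA) /= w_diag add0n addnC.
by rewrite leq_add2r leq_sum // => j /andP[jA ji]; apply: w_pos; rewrite // eq_sym.
Qed.

Hypothesis w_triangle :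
  forall x y z, x != y -> y != z -> x != z -> 2 <= w x y + w x z + w y z.

Lemma pair_weight_ge_turan2 (A : {set T}) : 4 * turan2_edges #|A| <= pair_weight w A.
Proof.
have [m] := ubnP #|A|; elim: m A => // m IHm A; rewrite ltnS => le_Am.
have [/exists_inP[u uA /exists_inP[v vA /andP[uv /eqP w_uv]]] | no_zero] :=
  boolP [exists u in A, exists v in A, (u != v) && (w u v == 0)].
  set B := A :\ u :\ v.
  have cardA := cards_setD2 uA vA uv; rewrite -/B in cardA.
  have IHB : 4 * turan2_edges #|B| <= pair_weight w B by apply: IHm; lia.
  have weight_to_uv : 2 * #|B| <= \sum_(i in B) (w u i + w v i).
    rewrite -sum1_card big_distrr leq_sum //= => i; rewrite !in_setD1 => /and3P[iv iu _].
    by have := @w_triangle u v i uv; rewrite w_uv add0n eq_sym iv eq_sym iu => /(_ isT isT).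
  rewrite (pair_weightD2 uA vA uv) -/B w_uv cardA turan2_edgesSS; lia.
have w_pos i j : i \in A -> j \in A -> i != j -> 0 < w i j.
  move=> iA jA ij; rewrite lt0n; apply: contraNN no_zero => wij.
  by apply/exists_inP; exists i => //; apply/exists_inP; exists j; rewrite // ij.
have := pair_weight_dense w_pos; have := turan2_edges_le #|A|; lia.
Qed.

End WeightedMantel.

Lemma induced_edges_double n (e : rel 'I_n) (S : {set 'I_n}) : simple_graph e ->
  2 * induced_edges e S = \sum_(i in S) \sum_(j in S) e i j.
Proof.
case=> irr sym.
have -> : induced_edges e S =
    \sum_(i : 'I_n) \sum_(j : 'I_n) ([&& i < j, i \in S, j \in S & e i j] : nat).
  rewrite pair_bigA /induced_edges -sum1_card big_mkcond /=.
  by apply: eq_big => // p _; rewrite inE; case: ifP.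
rewrite mul2n -addnn {2}exchange_big /= -big_split [RHS]big_mkcond /=.
apply: eq_bigr => i _; rewrite -big_split /=.
case iS: (i \in S); last by rewrite big1 // => j _; rewrite /= !andbF.
rewrite /= [RHS]big_mkcond /=; apply: eq_bigr => j _.
case jS: (j \in S); rewrite /= ?andbF //.
by case: (ltngtP i j) => [//|ji|/val_inj ->]; rewrite ?addn0 ?(sym j i) ?irr.
Qed.

Lemma pair_weight_perm_twin n (e : rel 'I_n) (tau : {perm 'I_n}) (S : {set 'I_n}) :
  simple_graph e ->
  pair_weight (fun i j => e i j + e (tau i) (tau j)) S =
    2 * (induced_edges e S + induced_edges e (tau @: S)).
Proof.
move=> ge; rewrite mulnDr !induced_edges_double // /pair_weight.
rewrite big_imset /=; last by move=> ? ? _ _; apply: perm_inj.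
rewrite -big_split /=; apply: eq_bigr => i _.
by rewrite big_imset /= -?big_split // => ? ? _ _; apply: perm_inj.
Qed.

Theorem mainTheorem1 (n : nat) (e : rel 'I_n) :
  (1 <= n)%N ->
  simple_graph e ->
  (exists tau : {perm 'I_n},
     (forall x, tau (tau x) = x) /\
     (forall S : {set 'I_n}, #|S| = 3 ->
        (2 <= induced_edges e S + induced_edges e (tau @: S))%N)) ->
  (turan2_edges n <= num_edges e)%N.
Proof.
move=> _ ge [tau [_ tau_triple]].
pose w i j := e i j + e (tau i) (tau j).
have [irr sym] := ge.
have wC i j : w i j = w j i by rewrite /w sym (sym (tau j)).
have w_diag i : w i i = 0 by rewrite /w !irr.
have w_triangle x y z : x != y -> y != z -> x != z -> 2 <= w x y + w x z + w y z.
  move=> xy yz xz; have card3 : #|x |: [set y; z]| = 3.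
    by rewrite !cardsU1 cards1 !inE negb_or xy xz yz.
  have := tau_triple _ card3; rewrite -(leq_pmul2l (isT : 0 < 2)).
  by rewrite -pair_weight_perm_twin // (pair_weight_set3 wC w_diag xy yz xz) leq_pmul2l.
have tauT : tau @: [set: 'I_n] = [set: 'I_n].
  by apply/eqP; rewrite eqEcard subsetT card_imset ?leqnn //; apply: perm_inj.
have := pair_weight_ge_turan2 wC w_diag w_triangle [set: 'I_n].
rewrite pair_weight_perm_twin // tauT cardsT card_ord /num_edges; lia.
Qed.
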